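(* Let $\chi$ be a separable metric space with a $\sigma$-finite Borel measure $\Lambda$ of full support. Let $(f_n)_{n\ge1}\subseteq L^\infty(\Lambda)$ converge in $L^\infty(\Lambda)$ to $f$, and suppose each $f_n$ has a version $u_n$ that is bounded, non-negative and lower semicontinuous. Then $f$ has a bounded, non-negative, lower semicontinuous version $u$ which is maximal: every bounded, non-negative, lower semicontinuous version $\tilde u$ of $f$ satisfies $\tilde u(x)\le u(x)$ for all $x\in\chi$.
   Context: A version of an element of $L^\infty(\Lambda)$ is a Borel function agreeing with it $\Lambda$-almost everywhere. *)

From HB Require Import structures.
From mathcomp Require Import all_boot all_order all_algebra.
From mathcomp Require Import all_classical all_reals all_analysis.
From mathcomp Require Import ess_sup_inf.
Set Implicit Arguments. Unset Strict Implicit. Unset Printing Implicit Defensive.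
Import Order.TTheory GRing.Theory Num.Theory.
Import numFieldNormedType.Exports.
Local Open Scope classical_set_scope.
Local Open Scope ring_scope.

Definition borel (T : ptopologicalType) : measurableType (@open T).-sigma :=
  g_sigma_algebraType (@open T).

Definition separable (T : ptopologicalType) :=
  exists D : set T, countable D /\ dense D.

Definition full_support (R : realType) (T : ptopologicalType)
  (mu : {measure set (borel T) -> \bar R}) :=
  forall O : set T, open O -> O !=set0 -> (0 < mu O)%E.

Definition Linfty (R : realType) (T : ptopologicalType)
  (mu : {measure set (borel T) -> \bar R}) (f : T -> R) :=
  measurable_fun [set: borel T] (f : borel T -> R) /\
  (ess_sup mu (fun x : borel T => (`|f x|)%:E) < +oo)%E.

Definition Linfty_cvg (R : realType) (T : ptopologicalType)
  (mu : {measure set (borel T) -> \bar R}) (fn : nat -> T -> R) (f : T -> R) :=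
  (fun n => ess_sup mu (fun x : borel T => (`|fn n x - f x|)%:E)) @ \oo --> 0%E.

Definition version (R : realType) (T : ptopologicalType)
  (mu : {measure set (borel T) -> \bar R}) (f u : T -> R) :=
  measurable_fun [set: borel T] (u : borel T -> R) /\
  {ae mu, forall x : borel T, u x = f x}.

Definition bdd_nonneg_lsc (R : realType) (T : ptopologicalType) (u : T -> R) :=
  (exists M : R, forall x, `|u x| <= M) /\
  (forall x, 0 <= u x) /\
  lower_semicontinuous (fun x => (u x)%:E).

From HB Require Import structures.
From mathcomp Require Import all_boot all_order all_algebra.
From mathcomp Require Import all_classical all_reals all_analysis.
From mathcomp Require Import ess_sup_inf measurable_realfun.
From mathcomp Require Import lra.
Import Order.TTheory GRing.Theory Num.Theory.
Import numFieldNormedType.Exports.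
Local Open Scope classical_set_scope.
Local Open Scope ring_scope.

(* The maximal lower semicontinuous version of f is its essential lower
   envelope
     u(x) = sup { t | f >= t mu-a.e. on some open neighbourhood of x }.
   For an essentially bounded f and a measure of full support:
   - u is bounded by the essential bound of f and lower semicontinuous;
   - every lower semicontinuous v with f >= v - c a.e. satisfies v - c <= u
     everywhere (this gives maximality, with c = 0);
   - u <= f a.e.: the sets {f < u} are covered by countably many null sets
     "ball of rational radius around a point of a countable dense set, where
     f lies below a rational level" (this is where separability enters);
   - if f is uniformly a.e. approximable by non-negative lower semicontinuous
     functions (as is the L^oo-limit of the f_n), then u >= 0 and f <= u a.e.
   Hence u is a version of f with all the required properties. *)

Lemma open_measurable_borel (T : ptopologicalType) (O : set T) :
  open O -> measurable (O : set (borel T)).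
Proof. by move=> oO; apply: sub_sigma_algebra. Qed.

Lemma lsc_measurable (R : realType) (T : ptopologicalType) (v : T -> R) :
  lower_semicontinuous (fun x => (v x)%:E) ->
  measurable_fun [set: borel T] (v : borel T -> R).
Proof.
move=> /lower_semicontinuousP lv.
apply: (measurability _ (RGenOInfty.measurableE R)) => _ [_ [a ->] <-].
rewrite setTI; apply: sub_sigma_algebra.
by have := lv a; congr open; apply/seteqP; split => y /=;
  rewrite in_itv /= andbT lte_fin.
Qed.

Lemma negligible_countable_bigcup (R : realType) d (X : measurableType d)
  (mu : {measure set X -> \bar R}) (I : Type) (A : set I) (F : I -> set X) :
  countable A -> (forall i, A i -> mu.-negligible (F i)) ->
  mu.-negligible (\bigcup_(i in A) F i).
Proof.
move=> /countable_injP[g ginj] nF.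
pose G k := \bigcup_(i in A `&` [set i | g i = k]) F i.
apply: (@negligibleS _ _ _ mu (\bigcup_k G k)).
  by move=> x [i Ai Fix]; exists (g i) => //; exists i.
apply: negligible_bigcup => k.
have [[i0 [Ai0 gi0]]|none] := pselect (exists i, A i /\ g i = k).
  apply: negligibleS (nF i0 Ai0) => x [i [Ai gi] Fix].
  suff <- : i = i0 by [].
  by apply: ginj; rewrite ?inE // gi gi0.
apply: negligibleS (negligible_set0 mu) => x [i [Ai gi] _].
by apply: none; exists i.
Qed.

Lemma negligible_lt_of_eps (R : realType) d (X : measurableType d)
  (mu : {measure set X -> \bar R}) (g h : X -> R) :
  (forall e : R, 0 < e -> mu.-negligible [set y | h y < g y - e]) ->
  mu.-negligible [set y | h y < g y].
Proof.
move=> heps.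
apply: (@negligibleS _ _ _ mu (\bigcup_k [set y | h y < g y - k.+1%:R^-1])).
  move=> y /= hg; have [k hk] := ltr_add_invr hg.
  by exists k => //=; rewrite -(ltrD2r k.+1%:R^-1) subrK.
by apply: negligible_bigcup => k; apply: heps; rewrite invr_gt0.
Qed.

Lemma close_negligible_lt {R : realType} {d} {X : measurableType d}
  {mu : {measure set X -> \bar R}} {g h : X -> R} {e : R} :
  mu.-negligible [set y | e < `|g y - h y|] ->
  mu.-negligible [set y | h y < g y - e].
Proof.
by apply: negligibleS => y /= hg; apply: (lt_le_trans _ (ler_norm _)); lra.
Qed.

Lemma ess_sup_bound {R : realType} {d} {X : measurableType d}
  {mu : {measure set X -> \bar R}} {g : X -> R} :
  (ess_sup mu (fun x => (g x)%:E) < +oo)%E ->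
  exists M : R, mu.-negligible [set y | M < g y].
Proof.
move=> hs.
have [M hM] : exists M : R, (ess_sup mu (fun x => (g x)%:E) <= M%:E)%E.
  move: hs; case: (ess_sup _ _) => [r _| //|_]; first by exists r.
  by exists 0; rewrite leNye.
exists M; apply: negligibleS (ess_supP hM) => y /= My.
by apply/negP; rewrite lee_fin -ltNge.
Qed.

Lemma Linfty_cvg_close {R : realType} {T : ptopologicalType}
  {mu : {measure set (borel T) -> \bar R}} {fn} {f : T -> R} :
  Linfty_cvg mu fn f -> forall e : R, 0 < e -> exists n,
  mu.-negligible ([set y | e < `|fn n y - f y|] : set (borel T)).
Proof.
move=> hc e e0.
have [N _ HN] := hc _ (open_ereal_lt' (lte_tofin e0 : (0 < e%:E)%E)).
exists N; apply: negligibleS (ess_supP (ltW (HN N (leqnn N)))) => y /= ey.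
by apply/negP; rewrite lee_fin -ltNge.
Qed.

Lemma full_support_negligible_open {R : realType} {T : ptopologicalType}
  {mu : {measure set (borel T) -> \bar R}} {O : set T} :
  full_support mu -> open O -> mu.-negligible (O : set (borel T)) -> O = set0.
Proof.
move=> supp oO [N [mN N0 ON]].
have muO0 : mu O = 0%E.
  apply/eqP; rewrite -measure_le0 -N0.
  by apply: le_measure => //; rewrite inE //; exact: open_measurable_borel.
by apply/eqP/negPn/negP => /set0P /(supp O oO); rewrite muO0 ltxx.
Qed.

Definition lsc_approximable {R : realType} {T : ptopologicalType}
  (mu : {measure set (borel T) -> \bar R}) (f : T -> R) :=
  forall e : R, 0 < e -> exists v : T -> R,
    [/\ lower_semicontinuous (fun x => (v x)%:E), (forall x, 0 <= v x) &
        mu.-negligible ([set y | e < `|v y - f y|] : set (borel T))].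

(* The L^oo limit of functions with non-negative lsc versions is approximable:
   the version u_n differs from f_n only on a null set. *)
Lemma Linfty_limit_lsc_approximable {R : realType} {T : ptopologicalType}
  {mu : {measure set (borel T) -> \bar R}} {fn} {f : T -> R} :
  Linfty_cvg mu fn f ->
  (forall n, exists un : T -> R, version mu (fn n) un /\ bdd_nonneg_lsc un) ->
  lsc_approximable mu f.
Proof.
move=> hcvg hun e e0.
have [n hn] := Linfty_cvg_close hcvg _ e0.
have [un [[_ aun] [_ [un_ge0 un_lsc]]]] := hun n.
exists un; split => //.
apply: negligibleS (negligibleU hn aun) => y /= ey.
have [eq_un|neq_un] := eqVneq (un y) (fn n y); last first.
  by right => /= h; move: neq_un; rewrite h eqxx.
by left; rewrite -eq_un.
Qed.

Lemma dense_rational_ball {R : realType} {T : pseudoMetricType R}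
  {D W : set T} {y : T} : dense D -> nbhs y W ->
  exists d, exists r : rat, [/\ D d, ball d (ratr r) y & ball d (ratr r) `<=` W].
Proof.
move=> dD /nbhs_ballP[e /= e0 yeW].
have /nbhs_interior/nbhs_singleton yB : nbhs y (ball y (e / 4)).
  by apply: nbhsx_ballx; lra.
have [d [/interior_subset yd Dd]] := dD _ (ex_intro _ y yB) (@open_interior _ _).
have [r] : exists r : rat, ratr r \in `](e / 4), (e / 2)[ by apply: rat_in_itvoo; lra.
rewrite in_itv /= => /andP[r_gt r_lt].
exists d, r; split => //; first by apply/ball_sym/(le_ball _ yd); lra.
by move=> z dz; apply: yeW; apply: le_ball (ball_triangle yd dz); lra.
Qed.

Section essential_lower_envelope.
Variables (R : realType) (T : pseudoPMetricType R)
  (mu : {measure set (borel T) -> \bar R}) (f : T -> R).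

Definition ess_lower_levels (x : T) : set R := [set t | exists O : set T,
  [/\ open O, O x & mu.-negligible (O `&` [set y | f y < t] : set (borel T))]].

Definition ess_lower (x : T) : R := sup (ess_lower_levels x).

Hypothesis supp : full_support mu.
Variables (M : R) (hM : mu.-negligible ([set y | M < `|f y|] : set (borel T))).

Lemma ess_lower_levels_lb x : ess_lower_levels x (- M).
Proof.
exists setT; split => //; first exact: openT.
apply: negligibleS hM => y [_ /=] fy.
by rewrite -normrN; apply: (lt_le_trans _ (ler_norm _)); lra.
Qed.

(* A level above the essential bound would make a neighbourhood null. *)
Lemma ess_lower_levels_ub x t : ess_lower_levels x t -> t <= M.
Proof.
case=> O [oO Ox nO]; rewrite leNgt; apply/negP => Mt.
suff O0 : O = set0 by rewrite O0 in Ox.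
apply: (full_support_negligible_open supp oO).
apply: negligibleS (negligibleU nO hM) => y Oy /=.
have [fyt|tfy] := ltP (f y) t; [by left | right].
by apply: (lt_le_trans Mt); apply: (le_trans tfy); exact: ler_norm.
Qed.

Lemma ess_lower_has_sup x : has_sup (ess_lower_levels x).
Proof.
split; first by exists (- M); exact: ess_lower_levels_lb.
by exists M => t /ess_lower_levels_ub.
Qed.

Lemma ess_lower_ge x t : ess_lower_levels x t -> t <= ess_lower x.
Proof. by move=> Lt; apply: sup_upper_bound => //; exact: ess_lower_has_sup. Qed.

Lemma ess_lower_le_bound x : ess_lower x <= M.
Proof.
apply: ge_sup => [|t /ess_lower_levels_ub //].
by exists (- M); exact: ess_lower_levels_lb.
Qed.

(* A level witnessed by an open set O is witnessed at every point of O. *)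
Lemma ess_lower_lsc : lower_semicontinuous (fun x => (ess_lower x)%:E).
Proof.
move=> x a; rewrite lte_fin => a_lt.
have [t [ O [oO Ox nO]] a_t] :=
  sup_gt (ex_intro _ _ (ess_lower_levels_lb x)) a_lt.
exists O; first exact: open_nbhs_nbhs.
move=> y Oy; rewrite lte_fin; apply: (lt_le_trans a_t); apply: ess_lower_ge.
by exists O.
Qed.

Lemma lsc_le_ess_lower {v : T -> R} {c : R} :
  lower_semicontinuous (fun x => (v x)%:E) ->
  mu.-negligible ([set y | f y < v y - c] : set (borel T)) ->
  forall x, v x - c <= ess_lower x.
Proof.
move=> lv nv x; apply/ler_addgt0Pr => e e0.
have [V + vV] := lv x (v x - e) ltac:(rewrite lte_fin; lra).
rewrite nbhsE => -[ O [oO Ox] OV].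
rewrite -lerBlDr; apply: ess_lower_ge; exists O; split => //.
apply: negligibleS nv => y [Oy /=] fy.
by have := vV y (OV y Oy); rewrite lte_fin; lra.
Qed.

(* Separability: the set {f < ess_lower} is covered by countably many null
   sets  ball d r `&` {f < q}  with d in D and q, r rational. *)
Lemma ess_lower_le_ae {D : set T} : countable D -> dense D ->
  mu.-negligible ([set y | f y < ess_lower y] : set (borel T)).
Proof.
move=> cD dD.
pose piece (i : T * (rat * rat)) : set (borel T) :=
  ball i.1 (ratr i.2.2) `&` [set y | f y < ratr i.2.1].
pose null_pieces := [set i | D i.1 /\ mu.-negligible (piece i)].
apply: (@negligibleS _ _ _ mu (\bigcup_(i in null_pieces) piece i)); last first.
  apply: negligible_countable_bigcup => [|i [] //].
  apply: sub_countable (countableX cD (countableP [set: rat * rat])).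
  by apply: subset_card_le => -[d qr] [Dd _].
move=> y /= fyU.
have [q] := rat_in_itvoo fyU; rewrite in_itv /= => /andP[fq qU].
have [t [ O [oO Oy nO]] q_t] :=
  sup_gt (ex_intro _ _ (ess_lower_levels_lb y)) qU.
have [d [r [Dd yd dO]]] := dense_rational_ball dD (open_nbhs_nbhs (conj oO Oy)).
exists (d, (q, r)) => //; split => //=.
apply: negligibleS nO => z [dz /= fz]; split; first exact: dO.
exact: lt_trans q_t.
Qed.

Hypothesis approx : lsc_approximable mu f.

(* Each approximant v >= 0 satisfies v - e <= ess_lower, hence ess_lower >= 0. *)
Lemma ess_lower_ge0 x : 0 <= ess_lower x.
Proof.
apply/ler_addgt0Pr => e e0; have [v [lv v_ge0 nv]] := approx _ e0.
have := lsc_le_ess_lower lv (close_negligible_lt nv) x.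
by have := v_ge0 x; lra.
Qed.

(* With v an (e/2)-approximant: f - e/2 <= v a.e. and v - e/2 <= ess_lower. *)
Lemma ess_lower_ge_ae :
  mu.-negligible ([set y | ess_lower y < f y] : set (borel T)).
Proof.
apply: negligible_lt_of_eps => e e0.
have [v [lv _ nv]] := approx _ (divr_gt0 e0 (ltr0n _ 2) : 0 < e / 2).
have v_le := lsc_le_ess_lower lv (close_negligible_lt nv).
have nv' : mu.-negligible ([set y | e / 2 < `|f y - v y|] : set (borel T)).
  by apply: negligibleS nv => y /=; rewrite distrC.
apply: negligibleS (close_negligible_lt nv') => y /= uf.
by have := v_le y; lra.
Qed.

Lemma ess_lower_maximal_version : separable T ->
  [/\ version mu f ess_lower, bdd_nonneg_lsc ess_lower &
      forall v : T -> R, version mu f v -> bdd_nonneg_lsc v ->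
        forall x, v x <= ess_lower x].
Proof.
move=> [D [cD dD]]; split.
- split; first by apply: lsc_measurable; exact: ess_lower_lsc.
  change (mu.-negligible (~` [set x : borel T | ess_lower x = f x])).
  apply: negligibleS (negligibleU ess_lower_ge_ae (ess_lower_le_ae cD dD)).
  by move=> y /= /eqP; rewrite neq_lt => /orP[]; [left | right].
- split; last by split; [exact: ess_lower_ge0 | exact: ess_lower_lsc].
  by exists M => x; rewrite ger0_norm ?ess_lower_ge0 ?ess_lower_le_bound.
- move=> v [_ v_ae] [_ [_ v_lsc]] x.
  rewrite -[v x]subr0; apply: lsc_le_ess_lower => //.
  apply: negligibleS v_ae => y /=; rewrite subr0 => fv vf.
  by rewrite vf ltxx in fv.
Qed.

End essential_lower_envelope.

Theorem mainTheorem19 (R : realType) (T : pseudoPMetricType R)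
  (hT : hausdorff_space T) (sepT : separable T)
  (mu : {measure set (borel T) -> \bar R})
  (sfin : sigma_finite [set: borel T] mu) (supp : full_support mu)
  (fn : nat -> T -> R) (f : T -> R)
  (hfn : forall n, Linfty mu (fn n)) (hf : Linfty mu f)
  (hcvg : Linfty_cvg mu fn f)
  (hun : forall n, exists un : T -> R, version mu (fn n) un /\ bdd_nonneg_lsc un) :
  exists u : T -> R, version mu f u /\ bdd_nonneg_lsc u /\
    forall v : T -> R, version mu f v -> bdd_nonneg_lsc v -> forall x, v x <= u x.
Proof.
have [_ f_ess] := hf.
have [M hM] := ess_sup_bound f_ess.
have approx := Linfty_limit_lsc_approximable hcvg hun.
have [u_version u_bdd u_max] :=
  @ess_lower_maximal_version R T mu f supp M hM approx sepT.
by exists (ess_lower R T mu f).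
Qed.
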